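(* Let $1<p\le n$. Let $\mathbf{X}$ be a deterministic $n\times p$ matrix with $\mathbf{X}^T\mathbf{X}=\mathbf{I}_p$, let $\boldsymbol\beta_0=(\beta_1,0,\dots,0)^T\in\mathbb{R}^p$ with $\beta_1\neq 0$, let $\sigma>0$, and let $\mathbf{y}=\mathbf{X}\boldsymbol\beta_0+\boldsymbol\varepsilon$ with $\varepsilon_1,\dots,\varepsilon_n$ i.i.d. $N(0,\sigma^2)$. Set $\mathbf z=\mathbf{X}^T\mathbf{y}$. For $\lambda\ge 0$ define $$L_p(\lambda)=\frac1n\Big(\beta_1-\operatorname{sgn}(z_1)(|z_1|-\lambda)_+\Big)^2+\frac1n\sum_{j=2}^p\big((|z_j|-\lambda)_+\big)^2,\qquad L_1(\lambda)=\frac1n\Big(\beta_1-\operatorname{sgn}(z_1)(|z_1|-\lambda)_+\Big)^2,$$ and $L_p(\lambda_p^* )=\min_{\lambda\ge0}L_p(\lambda)$, $L_1(\lambda_1^* )=\min_{\lambda\ge 0}L_1(\lambda)$. Then $$\mathbb E\left(\frac{L_p(\lambda_p^* )}{L_1(\lambda_1^* )}\right)=\infty.$$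
   Context: $(a)_+=\max(a,0)$; $\operatorname{sgn}$ is the sign function. The ratio is a nonnegative extended-real random variable with the convention $a/0=+\infty$ for $a>0$ (the value assigned to $0/0$ is any fixed number in $[0,\infty)$, e.g. $1$; it does not affect the conclusion). $L_p(\lambda)$ is the $L_2$ loss of the Lasso estimate $\hat\beta_{\lambda j}=\operatorname{sgn}(z_j)(|z_j|-\lambda)_+$ with all $p$ predictors and $L_1(\lambda)$ the loss using only the first (true) predictor. *)

From HB Require Import structures.
From mathcomp Require Import all_boot all_order all_algebra.
From mathcomp Require Import all_classical all_reals all_analysis.
Set Implicit Arguments. Unset Strict Implicit. Unset Printing Implicit Defensive.
Import Order.TTheory GRing.Theory Num.Theory.
Local Open Scope classical_set_scope.
Local Open Scope ring_scope.

Definition pos_part {R : realType} (a : R) : R := Num.max a 0.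

Definition soft {R : realType} (z lam : R) : R := Num.sg z * pos_part (`|z| - lam).

Definition mutually_independent {R : realType} d (T : measurableType d)
  (P : probability T R) (n : nat) (e : 'I_n -> {RV P >-> R}) : Prop :=
  forall B : 'I_n -> set R, (forall i, measurable (B i)) ->
    P (\bigcap_(i in [set: 'I_n]) (e i @^-1` B i)) =
    (\prod_(i < n) P (e i @^-1` B i))%E.

(* z = X^T y with y = X beta0 + eps, evaluated at outcome w *)
Definition zvec {R : realType} d (T : measurableType d) (P : probability T R)
  (n p : nat) (X : 'M[R]_(n, p)) (beta0 : 'I_p -> R)
  (e : 'I_n -> {RV P >-> R}) (w : T) (j : 'I_p) : R :=
  \sum_(i < n) X i j * ((\sum_(k < p) X i k * beta0 k) + e i w).

Definition L1fun {R : realType} (n : nat) (beta1 z1 lam : R) : R :=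
  n%:R^-1 * (beta1 - soft z1 lam) ^+ 2.

(* L_p(lambda) = L_1(lambda) + (1/n) sum_{j=2}^p ((|z_j|-lambda)_+)^2 ;
   j0 is the first index (j = 1 in the paper). *)
Definition Lpfun {R : realType} (n p : nat) (j0 : 'I_p) (beta1 : R)
  (z : 'I_p -> R) (lam : R) : R :=
  L1fun n beta1 (z j0) lam +
  n%:R^-1 * \sum_(j < p | j != j0) (pos_part (`|z j| - lam)) ^+ 2.

(* minimal value over lambda >= 0 (the minimum is attained; we take the inf) *)
Definition minval {R : realType} (L : R -> R) : R :=
  inf [set L lam | lam in [set lam : R | 0 <= lam]].

Definition eratio {R : realType} (a b : R) : \bar R :=
  if b == 0 then (if a == 0 then 1%E else +oo%E) else (a / b)%:E.

(* Proof idea: with positive probability the noise X^T eps lands in a small box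
   around a point where the first coordinate has the sign of beta1 and the
   second one exceeds |z_1| by at least 1.  There, lambda = |z_1 - beta1|
   recovers beta1 exactly, so min L_1 = 0, while every lambda leaves either
   beta1 unrecovered or the second (null) coefficient at least 1 away from 0,
   so min L_p >= min(1, beta1^2) / n > 0.  The ratio is thus +oo on an event
   of positive probability, and its expectation is +oo. *)

From HB Require Import structures.
From mathcomp Require Import all_boot all_order all_algebra.
From mathcomp Require Import all_classical all_reals all_analysis.
From mathcomp Require Import lra measurable_realfun.
Import Order.TTheory GRing.Theory Num.Theory.
Local Open Scope classical_set_scope.
Local Open Scope ring_scope.

Section lasso_losses.
Context {R : realType}.
Implicit Types (b w y lam : R).

Lemma soft_shrink_exact b w : 0 < b * w -> soft (b + w) `|w| = b.
Proof.
rewrite /soft /pos_part.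
have [b0|b0|->] := ltgtP b 0; last by rewrite mul0r ltxx.
- rewrite nmulr_rgt0 // => w0; have bw : b + w < 0 by lra.
  by rewrite (ltr0_norm bw) (ltr0_norm w0) (ltr0_sg bw) max_l; lra.
- rewrite pmulr_rgt0 // => w0; have bw : 0 < b + w by lra.
  by rewrite (gtr0_norm bw) (gtr0_norm w0) (gtr0_sg bw) max_l; lra.
Qed.

Lemma sqr_soft_loss_ge b {z0 y : R} lam : `|z0| + 1 <= `|y| ->
  Num.min 1 (b ^+ 2) <= (b - soft z0 lam) ^+ 2 + pos_part (`|y| - lam) ^+ 2.
Proof.
move=> zy; have [lam_small|lam_large] := leP lam (`|y| - 1).
  have y1 : 1 <= pos_part (`|y| - lam) by rewrite /pos_part le_max; lra.
  have y1sq : 1 <= pos_part (`|y| - lam) ^+ 2 by rewrite expr2; nra.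
  by rewrite ge_min; apply/orP; left; have := sqr_ge0 (b - soft z0 lam); lra.
have soft0 : soft z0 lam = 0 by rewrite /soft /pos_part max_r ?mulr0 //; lra.
rewrite soft0 subr0 ge_min; apply/orP; right.
by have := sqr_ge0 (pos_part (`|y| - lam)); lra.
Qed.

Lemma minval_ge (L : R -> R) m : (forall lam, 0 <= lam -> m <= L lam) ->
  m <= minval L.
Proof.
move=> Lm; apply: lb_le_inf; first by exists (L 0); exists 0; rewrite /= ?lexx.
by move=> _ [lam lam0 <-]; exact: Lm.
Qed.

Lemma minval_le {L : R -> R} {lam} : (forall l, 0 <= l -> 0 <= L l) -> 0 <= lam ->
  minval L <= L lam.
Proof.
move=> L0 lam0; apply: ge_inf; last by exists lam.
by exists 0 => _ [l l0 <-]; exact: L0.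
Qed.

Lemma L1fun_ge0 n b z0 lam : 0 <= L1fun n b z0 lam.
Proof. by rewrite /L1fun mulr_ge0 ?invr_ge0 ?ler0n ?sqr_ge0. Qed.

Lemma Lpfun_ge0 n p j0 b (z : 'I_p -> R) lam : 0 <= Lpfun n j0 b z lam.
Proof.
rewrite /Lpfun addr_ge0 ?L1fun_ge0 // mulr_ge0 ?invr_ge0 ?ler0n //.
by apply: sumr_ge0 => j _; exact: sqr_ge0.
Qed.

Lemma minval_L1fun n b w : 0 < b * w -> minval (L1fun n b (b + w)) = 0.
Proof.
move=> bw; apply/eqP; rewrite eq_le minval_ge ?andbT; last by move=> *; exact: L1fun_ge0.
apply: le_trans (minval_le (fun l _ => L1fun_ge0 n b (b + w) l) (normr_ge0 w)) _.
by rewrite /L1fun soft_shrink_exact // subrr expr0n mulr0.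
Qed.

Lemma minval_Lpfun_ge n {p} {j0 j1 : 'I_p} b {z : 'I_p -> R} : j1 != j0 ->
  `|z j0| + 1 <= `|z j1| -> n%:R^-1 * Num.min 1 (b ^+ 2) <= minval (Lpfun n j0 b z).
Proof.
move=> j10 zj; apply: minval_ge => lam _.
rewrite /Lpfun /L1fun (bigD1 j1) //= -mulrDr ler_wpM2l ?invr_ge0 ?ler0n //.
have := sqr_soft_loss_ge b lam zj.
have : 0 <= \sum_(j < p | (j != j0) && (j != j1)) pos_part (`|z j| - lam) ^+ 2.
  by apply: sumr_ge0 => j _; exact: sqr_ge0.
lra.
Qed.

Lemma eratio_ge0 (a b : R) : 0 <= a -> 0 <= b -> (0 <= eratio a b)%E.
Proof.
move=> a0 b0; rewrite /eratio; case: eqP => _; first by case: eqP => _; rewrite ?lee01 ?leey.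
by rewrite lee_fin divr_ge0.
Qed.

Lemma sg_half_window {b w y : R} : b != 0 ->
  `|w - Num.sg b / 2| <= 4^-1 -> `|y - (`|b| + 2)| <= 4^-1 ->
  0 < b * w /\ `|b + w| + 1 <= `|y|.
Proof.
rewrite !ler_distl => b0 /andP[w_lo w_hi] /andP[y_lo y_hi].
have y_pos : 0 < y by have := normr_ge0 b; lra.
rewrite (gtr0_norm y_pos).
have [b_neg|b_pos|/eqP] := ltgtP b 0; last by rewrite (negbTE b0).
- rewrite ltr0_sg // in w_lo w_hi; rewrite ltr0_norm // in y_lo.
  rewrite ltr0_norm ?nmulr_rgt0 //; lra.
- rewrite gtr0_sg // in w_lo w_hi; rewrite gtr0_norm // in y_lo.
  rewrite gtr0_norm ?pmulr_rgt0 //; lra.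
Qed.

Lemma eratio_minval_pinfty {n p} {j0 j1 : 'I_p} {b} {z : 'I_p -> R} :
  (0 < n)%N -> b != 0 -> j1 != j0 -> 0 < b * (z j0 - b) -> `|z j0| + 1 <= `|z j1| ->
  eratio (minval (Lpfun n j0 b z)) (minval (L1fun n b (z j0))) = +oo%E.
Proof.
move=> n0 b0 j10 bw zj.
have -> : minval (L1fun n b (z j0)) = 0 by rewrite -(subrKC b (z j0)) minval_L1fun.
have Lp_gt0 : 0 < minval (Lpfun n j0 b z).
  apply: lt_le_trans (minval_Lpfun_ge n b j10 zj).
  by rewrite mulr_gt0 ?invr_gt0 ?ltr0n // lt_min ltr01 exprn_even_gt0.
by rewrite /eratio eqxx gt_eqF.
Qed.

End lasso_losses.

Section integral_pinfty.
Context {d} {T : measurableType d} {R : realType} (mu : {measure set T -> \bar R}).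
Local Open Scope ereal_scope.

(* No measurability is required: for nonnegative integrands the integral is a
   supremum over simple functions below the integrand. *)
Lemma ge0_le_integralT (f g : T -> \bar R) : (forall x, 0 <= g x) ->
  (forall x, g x <= f x) -> \int[mu]_x g x <= \int[mu]_x f x.
Proof.
move=> g0 gf; rewrite !ge0_integralTE //; last by move=> x; exact: le_trans (g0 x) (gf x).
by apply: ereal_sup_le => _ [h hg <-]; exists h => //= x; exact: le_trans (hg x) (gf x).
Qed.

Lemma ge0_integral_pinfty (f : T -> \bar R) (E : set T) : measurable E ->
  0 < mu E -> (forall x, 0 <= f x) -> (forall x, E x -> f x = +oo) ->
  \int[mu]_x f x = +oo.
Proof.
move=> mE muE f0 fE; apply/eqP; rewrite eq_le leey /=.
rewrite -(gt0_mulye muE) -integral_cst // integral_mkcond.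
apply: ge0_le_integralT => x; rewrite /patch; case: ifPn => //.
- by rewrite leey.
- by rewrite inE => /fE ->.
Qed.

End integral_pinfty.

Section normal_itv.
Context {R : realType}.

Lemma normal_prob_itv_gt0 (m sigma a b : R) : 0 < sigma -> a < b ->
  (0 < normal_prob m sigma [set` `]a, b[])%E.
Proof.
move=> s0 ab; pose M := `|a - m| + `|b - m|.
pose c := normal_peak sigma * expR (- M ^+ 2 / (sigma ^+ 2 *+ 2)).
have c0 : 0 < c by rewrite mulr_gt0 ?expR_gt0 ?normal_peak_gt0 ?gt_eqF.
apply: (@lt_le_trans _ _ (\int[lebesgue_measure]_(x in [set` `]a, b[]) (cst c%:E) x)%E).
  rewrite integral_cst //= lebesgue_measure_itv /= lte_fin ab -EFinB -EFinM lte_fin.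
  by rewrite mulr_gt0 // subr_gt0.
apply: ge0_le_integral => //=.
- by move=> x _; rewrite lee_fin ltW.
- by apply/measurable_EFinP; apply: measurable_funTS; exact: measurable_normal_pdf.
move=> x; rewrite in_itv /= => /andP[ax xb].
rewrite lee_fin normal_pdfE ?gt_eqF //= /c ler_wpM2l ?normal_peak_ge0 //.
rewrite /normal_fun ler_expR !mulNr lerN2 ler_pM2r ?invr_gt0 ?mulrn_wgt0 ?exprn_gt0 //.
have xm : `|x - m| <= M.
  have ma : m - a <= `|a - m| by rewrite distrC ler_norm.
  have bm : b - m <= `|b - m| by rewrite ler_norm.
  have := normr_ge0 (a - m); have := normr_ge0 (b - m).
  by rewrite ler_norml /M; move=> *; apply/andP; split; lra.
by rewrite -real_normK ?num_real // lerXn2r ?nnegrE ?(le_trans _ xm).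
Qed.

End normal_itv.

Section linear_model.
Context {R : realType} {n p : nat} (X : 'M[R]_(n, p)).

Lemma orthonormal_colsK (v : 'I_p -> R) j : X^T *m X = 1%:M ->
  \sum_(i < n) X i j * (\sum_(k < p) X i k * v k) = v j.
Proof.
move=> XtX; transitivity (\sum_(k < p) (X^T *m X) j k * v k).
  under eq_bigr do rewrite big_distrr /=.
  rewrite exchange_big /=; apply: eq_bigr => k _.
  by rewrite !mxE big_distrl /=; apply: eq_bigr => i _; rewrite !mxE mulrA.
rewrite XtX (bigD1 j) //= big1 ?addr0; first by rewrite mxE eqxx mulr1n mul1r.
by move=> k kj; rewrite mxE eq_sym (negbTE kj) mulr0n mul0r.
Qed.

Lemma sum_cols_near (c : 'I_n -> R) (e : R) : 0 < e ->
  exists2 del : R, 0 < del & forall v : 'I_n -> R, (forall i, `|v i - c i| < del) ->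
    forall j, `|\sum_(i < n) X i j * v i - \sum_(i < n) X i j * c i| <= e.
Proof.
move=> e0; pose S : R := \sum_(i < n) \sum_(k < p) `|X i k|.
have S0 : 0 <= S by apply: sumr_ge0 => i _; apply: sumr_ge0 => k _.
exists (e / (1 + S)) => [|v vc j]; first by rewrite divr_gt0 // ltr_pwDl.
rewrite -sumrB; apply: le_trans (ler_norm_sum _ _ _) _.
apply: le_trans (_ : \sum_(i < n) `|X i j| * (e / (1 + S)) <= _).
  apply: ler_sum => i _; rewrite -mulrBr normrM ler_wpM2l //; exact: ltW.
rewrite -mulr_suml mulrCA ler_piMr ?(ltW e0) // ler_pdivrMr ?ltr_pwDl // mul1r.
apply: le_trans (_ : S <= _); last by rewrite lerDr.
apply: ler_sum => i _; rewrite (bigD1 j) //= lerDl.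
by apply: sumr_ge0 => k _.
Qed.

End linear_model.

Section gaussian_noise.
Context {d} {T : measurableType d} {R : realType} {P : probability T R} {n : nat}.
Context {sigma : R} (eps : 'I_n -> {RV P >-> R}).
Hypotheses (sigma_gt0 : 0 < sigma) (eps_indep : mutually_independent eps)
  (eps_normal : forall i B, measurable B ->
     distribution P (eps i) B = normal_prob 0 sigma B).

Definition noise_box (a b : 'I_n -> R) : set T :=
  \bigcap_(i in [set: 'I_n]) (eps i @^-1` [set` `]a i, b i[]).

Lemma measurable_noise_box a b : measurable (noise_box a b).
Proof.
apply: fin_bigcap_measurable; first exact: finite_finset.
by move=> i _; exact: measurable_funPTI.
Qed.

Lemma noise_box_gt0 a b : (forall i, a i < b i) -> (0 < P (noise_box a b))%E.
Proof.
move=> ab; rewrite /noise_box eps_indep //.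
elim/big_ind: _ => //; first by move=> x y; exact: mule_gt0.
move=> i _; have := @eps_normal i _ (measurable_itv `]a i, b i[).
by rewrite /distribution /pushforward /= => ->; exact: normal_prob_itv_gt0.
Qed.

End gaussian_noise.

Lemma zvecE (R : realType) d (T : measurableType d) (P : probability T R)
    (n p : nat) (X : 'M[R]_(n, p)) (beta0 : 'I_p -> R) (e : 'I_n -> {RV P >-> R}) w j :
  X^T *m X = 1%:M -> zvec X beta0 e w j = beta0 j + \sum_(i < n) X i j * e i w.
Proof.
move=> XtX; rewrite /zvec -(orthonormal_colsK X beta0 j XtX) -big_split /=.
by apply: eq_bigr => i _; rewrite mulrDr.
Qed.

Theorem proposition2p5 (R : realType) (d : measure_display) (T : measurableType d)
  (P : probability T R) (n p : nat) (hp : (1 < p)%N) (hpn : (p <= n)%N)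
  (X : 'M[R]_(n, p)) (hX : X^T *m X = 1%:M)
  (beta1 : R) (hb : beta1 != 0) (sigma : R) (hs : 0 < sigma)
  (eps : 'I_n -> {RV P >-> R})
  (hind : mutually_independent eps)
  (hnorm : forall i B, measurable B ->
     distribution P (eps i) B = normal_prob 0 sigma B) :
  let j0 : 'I_p := Ordinal (ltnW hp) in
  let beta0 : 'I_p -> R := fun j => if j == j0 then beta1 else 0 in
  let z := zvec X beta0 eps in
  (\int[P]_w eratio (minval (Lpfun n j0 beta1 (z w)))
                    (minval (L1fun n beta1 (z w j0))))%E = +oo%E.
Proof.
move=> j0 beta0 z; pose j1 : 'I_p := Ordinal hp.
have j10 : j1 != j0 by [].
pose u j := if j == j0 then Num.sg beta1 / 2 else if j == j1 then `|beta1| + 2 else 0.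
pose c i := \sum_(k < p) X i k * u k.
have quarter_gt0 : 0 < 4^-1 :> R by rewrite invr_gt0.
have [del del0 near_u] := sum_cols_near X c _ quarter_gt0.
pose E := noise_box eps (fun i => c i - del) (fun i => c i + del).
apply: (ge0_integral_pinfty P _ E).
- exact: measurable_noise_box.
- by apply: (noise_box_gt0 eps hs hind hnorm) => i; rewrite ltrD2l gtrN.
- by move=> w; apply: eratio_ge0; apply: minval_ge => l _; [exact: Lpfun_ge0|exact: L1fun_ge0].
move=> w Ew.
have noise_near j : `|(z w j - beta0 j) - u j| <= 4^-1.
  rewrite /z zvecE // [beta0 j + _]addrC addrK -(orthonormal_colsK X u j hX); apply: near_u => i.
  by move: Ew => /(_ i Logic.I); rewrite /= in_itv /= distrC ltr_distlC.
have near0 := noise_near j0; have near1 := noise_near j1.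
rewrite /beta0 /u eqxx in near0; rewrite /beta0 /u (negbTE j10) eqxx subr0 in near1.
have [sign_ok gap_ok] := sg_half_window hb near0 near1; rewrite subrKC in gap_ok.
apply: eratio_minval_pinfty hb j10 sign_ok gap_ok.
by apply: leq_trans hpn; exact: ltnW.
Qed.
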